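(* Let $V$ be a finite set and for each $v\in V$ let $P_v(x)$ be a Bernstein polynomial in $n$ variables. Fix a domain $S\subseteq[0,1]^n$. If $\sum_{v\in V}P_v(x)>0$ for all $x\in S$, then there exists a Bernoulli factory with output set $V$ which terminates almost surely on $S$ and, for every $x\in S$, outputs $v$ with probability $P_v(x)/\sum_{v'\in V}P_{v'}(x)$.
   Context: A Bernstein monomial is $\prod_{i=1}^n x_i^{a_i}(1-x_i)^{b_i}$ with nonnegative integers $a_i,b_i$; a Bernstein polynomial is a finite combination $\sum_j c_jM_j(x)$ of Bernstein monomials with positive coefficients $c_j$. A Bernoulli factory with output set $V$ (for inputs $x\in[0,1]^n$) is a (possibly infinite) rooted binary tree whose internal nodes are labeled by an index $i\in[n]$ or a known constant $c\in(0,1)$ and whose leaves are labeled by elements of $V$; on input $x$ one walks from the root, at a node labeled $i$ flipping a fresh independent coin that is $1$ with probability $x_i$, at a node labeled $c$ a fresh coin of bias $c$, following the edge labeled by the outcome, and outputs the label of the leaf reached; $\mathcal{F}(x)$ is the output ($\emptyset$ if no leaf is reached). It terminates almost surely on $S$ if $\Pr[\mathcal{F}(x)=\emptyset]=0$ for all $x\in S$. *)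

From HB Require Import structures.
From mathcomp Require Import all_boot all_order all_algebra.
From mathcomp Require Import all_classical all_reals all_analysis.
Set Implicit Arguments. Unset Strict Implicit. Unset Printing Implicit Defensive.
Import Order.TTheory GRing.Theory Num.Theory.
Import numFieldNormedType.Exports.
Local Open Scope classical_set_scope.
Local Open Scope ring_scope.

Section Bernoulli.
Variable R : realType.

Definition bern_monomial (n : nat) (a b : 'I_n -> nat) (x : 'I_n -> R) : R :=
  \prod_(i < n) (x i ^+ a i * (1 - x i) ^+ b i).

(** P is a Bernstein polynomial: a finite combination, with positive
    coefficients, of Bernstein monomials (the empty combination, i.e. the zero
    polynomial, is allowed). *)
Definition is_bernstein (n : nat) (P : ('I_n -> R) -> R) : Prop :=
  exists s : seq (R * ('I_n -> nat) * ('I_n -> nat)),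
    (forall t, t \in s -> 0 < t.1.1) /\
    (forall x, P x = \sum_(t <- s) t.1.1 * bern_monomial t.1.2 t.2 x).

Inductive bf_node (n : nat) (V : Type) : Type :=
| CoinX of 'I_n      (* flip a coin of bias x_i *)
| CoinC of R         (* flip a coin of known bias c *)
| Leaf of V.

(** A (possibly infinite) rooted binary tree is given by the label of the
    node at each address; the address of a node is the sequence of coin
    outcomes (edge labels) on the path from the root, the child of address
    p along outcome b being rcons p b.  Only nodes all of whose strict
    ancestors are internal are actually part of the tree. *)
Definition bf_tree (n : nat) (V : Type) := seq bool -> bf_node n V.

Definition bf_wf (n : nat) (V : Type) (t : bf_tree n V) : Prop :=
  forall p c, t p = CoinC _ _ c -> 0 < c < 1.

Definition edge_prob (n : nat) (V : Type) (x : 'I_n -> R) (nd : bf_node n V)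
  (b : bool) : R :=
  match nd with
  | CoinX i => if b then x i else 1 - x i
  | CoinC c => if b then c else 1 - c
  | Leaf _ => 0
  end.

(** Probability that the walk on input x visits address p
    (zero if the path passes through a leaf). *)
Definition path_prob (n : nat) (V : Type) (t : bf_tree n V) (x : 'I_n -> R)
  (p : seq bool) : R :=
  \prod_(j < size p) edge_prob x (t (take j p)) (nth false p j).

Definition is_leaf_with (n : nat) (V : eqType) (nd : bf_node n V) (v : V) : bool :=
  if nd is Leaf w then w == v else false.

Definition out_prob_upto (n : nat) (V : eqType) (t : bf_tree n V)
  (x : 'I_n -> R) (v : V) (N : nat) : R :=
  \sum_(k < N) \sum_(p : k.-tuple bool)
     (if is_leaf_with (t p) v then path_prob t x p else 0).

Definition outputs_with_prob (n : nat) (V : eqType) (t : bf_tree n V)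
  (x : 'I_n -> R) (v : V) (q : R) : Prop :=
  out_prob_upto t x v @ \oo --> q.

Definition halt_prob_upto (n : nat) (V : Type) (t : bf_tree n V)
  (x : 'I_n -> R) (N : nat) : R :=
  \sum_(k < N) \sum_(p : k.-tuple bool)
     (if t p is Leaf _ then path_prob t x p else 0).

Definition terminates_as_on (n : nat) (V : Type) (t : bf_tree n V)
  (S : set ('I_n -> R)) : Prop :=
  forall x, S x -> (fun N => 1 - halt_prob_upto t x N) @ \oo --> (0 : R).

End Bernoulli.

From HB Require Import structures.
From mathcomp Require Import all_boot all_order all_algebra.
From mathcomp Require Import all_classical all_reals all_analysis.
From mathcomp Require Import ring lra.
Import Order.TTheory GRing.Theory Num.Theory.
Import numFieldNormedType.Exports.
Local Open Scope classical_set_scope.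
Local Open Scope ring_scope.
Set Implicit Arguments. Unset Strict Implicit. Unset Printing Implicit Defensive.

(* Write the Bernstein polynomials as one list of weighted terms (v, c, M),
   with c > 0 and M a Bernstein monomial.  The factory picks term (v, c, M)
   with probability c / (W + 1), W the total weight, by a chain of constant
   coins, and otherwise restarts; once a term is picked it flips, for each
   factor x_i resp. 1 - x_i of M, a coin of bias x_i and outputs v if all
   flips agree with M, restarting at the first disagreement.  Each round thus
   outputs v with probability (sum of c M(x) over the terms of v) / (W + 1)
   and restarts with the remaining probability, so the limit output
   probability p_v satisfies a linear equation whose solution is
   P_v(x) / sum_w P_w(x); these limits sum to 1, which is almost sure
   termination. *)

Lemma sum_tuple0 (T : finType) (M : nmodType) (F : 0.-tuple T -> M) :
  \sum_(p : 0.-tuple T) F p = F [tuple].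
Proof.
rewrite (eq_bigr (fun _ => F [tuple])); last by move=> p _; rewrite tuple0.
by rewrite sumr_const card_tuple expn0.
Qed.

Lemma sum_tupleS (T : finType) (M : nmodType) k (F : k.+1.-tuple T -> M) :
  \sum_(p : k.+1.-tuple T) F p =
  \sum_(b : T) \sum_(p : k.-tuple T) F [tuple of b :: p].
Proof.
rewrite pair_big /=.
rewrite (reindex (fun bp : T * k.-tuple T => [tuple of bp.1 :: bp.2])) //=.
exists (fun p : k.+1.-tuple T => (thead p, [tuple of behead p])).
- by move=> [b p] _ /=; rewrite theadE; congr pair; exact: val_inj.
- by move=> p _ /=; rewrite -tuple_eta.
Qed.

Section FactoryRecursion.
Variables (R : realType) (n : nat) (V : eqType).
Implicit Types (t : bf_tree R n V) (x : 'I_n -> R) (v : V).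

Definition subtree t (b : bool) : bf_tree R n V := fun p => t (b :: p).

Definition leaf_ind (nd : bf_node R n V) v : R := (is_leaf_with nd v)%:R.

Lemma path_prob_cons t x b p :
  path_prob t x (b :: p) = edge_prob x (t [::]) b * path_prob (subtree t b) x p.
Proof. by rewrite /path_prob /= big_ord_recl. Qed.

Lemma out_prob_uptoS t x v N :
  out_prob_upto t x v N.+1 = leaf_ind (t [::]) v
   + edge_prob x (t [::]) true * out_prob_upto (subtree t true) x v N
   + edge_prob x (t [::]) false * out_prob_upto (subtree t false) x v N.
Proof.
rewrite /out_prob_upto big_ord_recl sum_tuple0 /= /path_prob big_ord0 -addrA.
congr (_ + _); first by rewrite /leaf_ind; case: ifP.
rewrite !mulr_sumr -big_split /=; apply: eq_bigr => k _.
rewrite sum_tupleS big_bool /= !mulr_sumr.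
by congr (_ + _); apply: eq_bigr => p _;
  rewrite -/(path_prob t x (_ :: _)) path_prob_cons; case: ifP; rewrite ?mulr0.
Qed.

Variable x : 'I_n -> R.

Definition substochastic t := forall p,
  [/\ 0 <= edge_prob x (t p) true, 0 <= edge_prob x (t p) false &
      edge_prob x (t p) true + edge_prob x (t p) false <= 1].

Lemma substochastic_subtree t b : substochastic t -> substochastic (subtree t b).
Proof. by move=> t_sub p; exact: t_sub. Qed.

Lemma substochastic_wf t : bf_wf t -> (forall i, 0 <= x i <= 1) -> substochastic t.
Proof.
move=> t_wf x01 p; case E: (t p) => [i|c|w] /=.
- by have /andP[] := x01 i; split; lra.
- by have /andP[] := t_wf _ _ E; split; lra.
- by split; lra.
Qed.

Variable v : V.

Lemma leaf_ind_edge_prob_le1 (nd : bf_node R n V) :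
  edge_prob x nd true + edge_prob x nd false <= 1 ->
  leaf_ind nd v + edge_prob x nd true + edge_prob x nd false <= 1.
Proof.
by rewrite /leaf_ind; case: nd => [i|c|w] /=; rewrite ?add0r // !addr0 lern1 leq_b1.
Qed.

Lemma out_prob_upto_in01 N t : substochastic t -> 0 <= out_prob_upto t x v N <= 1.
Proof.
elim: N t => [|N IHN] t t_sub; first by rewrite /out_prob_upto big_ord0 lexx ler01.
rewrite out_prob_uptoS.
have [e0 e1 /leaf_ind_edge_prob_le1 le1] := t_sub [::].
have leaf_ge0 : 0 <= leaf_ind (t [::]) v by [].
have /andP[a0 a1] := IHN _ (substochastic_subtree true t_sub).
have /andP[b0 b1] := IHN _ (substochastic_subtree false t_sub).
by nra.
Qed.

Lemma nondecreasing_out_prob_upto t :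
  substochastic t -> nondecreasing_seq (out_prob_upto t x v).
Proof.
move=> t_sub; apply/nondecreasing_seqP => N; elim: N t t_sub => [|N IHN] t t_sub.
  by have /andP[] := out_prob_upto_in01 1 t_sub; rewrite /out_prob_upto big_ord0.
rewrite (out_prob_uptoS t x v N) (out_prob_uptoS t x v N.+1).
have [e0 e1 _] := t_sub [::].
by rewrite -!addrA; apply: lerD => //; apply: lerD; apply: ler_wpM2l => //;
  exact/IHN/substochastic_subtree.
Qed.

Definition out_prob t : R := sup (range (out_prob_upto t x v)).

Lemma out_prob_upto_cvg t : substochastic t -> out_prob_upto t x v @ \oo --> out_prob t.
Proof.
move=> t_sub; apply: nondecreasing_cvgn; first exact: nondecreasing_out_prob_upto.
by exists 1 => _ [N _ <-]; have /andP[] := out_prob_upto_in01 N t_sub.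
Qed.

Lemma out_probE t : substochastic t ->
  out_prob t = leaf_ind (t [::]) v + edge_prob x (t [::]) true * out_prob (subtree t true)
             + edge_prob x (t [::]) false * out_prob (subtree t false).
Proof.
move=> t_sub; have := out_prob_upto_cvg t_sub.
rewrite -cvg_shiftS => /cvg_lim <- //; apply: cvg_lim => //.
under eq_cvg do rewrite /= out_prob_uptoS.
have sub_cvg b : out_prob_upto (subtree t b) x v @ \oo --> out_prob (subtree t b).
  exact/out_prob_upto_cvg/substochastic_subtree.
by apply: cvgD; [apply: cvgD|]; [exact: cvg_cst|..]; apply: cvgM => //; exact: cvg_cst.
Qed.

End FactoryRecursion.

Lemma halt_prob_upto_sum (R : realType) n (V : finType) (t : bf_tree R n V) x N :
  halt_prob_upto t x N = \sum_(v : V) out_prob_upto t x v N.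
Proof.
rewrite /halt_prob_upto /out_prob_upto exchange_big; apply: eq_bigr => k _.
rewrite exchange_big; apply: eq_bigr => p _.
case: (t p) => [i|c|w] /=; try by rewrite big1.
by rewrite -big_mkcond (big_pred1 w) // => u; rewrite eq_sym.
Qed.

Lemma terminates_of_outputs (R : realType) n (V : finType) (t : bf_tree R n V) x
    (q : V -> R) :
  (forall v, outputs_with_prob t x v (q v)) -> \sum_(v : V) q v = 1 ->
  (fun N => 1 - halt_prob_upto t x N) @ \oo --> (0 : R).
Proof.
move=> t_q q_sum1; under eq_cvg do rewrite halt_prob_upto_sum.
have sum_cvg : (fun N => \sum_(v : V) out_prob_upto t x v N) @ \oo --> \sum_(v : V) q v.
  exact: (cvg_big add_continuous _ (fun v _ => t_q v)).
by have := cvgB (cvg_cst (1 : R)) sum_cvg; rewrite q_sum1 subrr; apply.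
Qed.

Section RejectionSampler.
Variables (R : realType) (n : nat) (V : eqType).

Record term := Term {
  term_out : V; term_coef : R; term_a : 'I_n -> nat; term_b : 'I_n -> nat }.

Definition term_coins (e : term) : seq ('I_n * bool) :=
  flatten [seq nseq (term_a e i) (i, true) ++ nseq (term_b e i) (i, false)
          | i <- index_enum 'I_n].

Inductive state := Select of seq term | Check of V & seq ('I_n * bool).

Definition weight (l : seq term) : R := \sum_(e <- l) term_coef e.

Definition select_bias (e : term) (l : seq term) : R :=
  term_coef e / (term_coef e + weight l + 1).

(* The restart coin of [Select [::]] carries the weight 1 added in
   [select_bias]; the fallback bias 1/2 in [Select (e :: l)] is never used when
   all coefficients are positive, it only makes every tree well formed. *)
Definition state_node (q : state) : bf_node R n V :=
  match q with
  | Select [::] => @CoinC R n V 2^-1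
  | Select (e :: l) =>
      let c := select_bias e l in @CoinC R n V (if 0 < c < 1 then c else 2^-1)
  | Check w [::] => @Leaf R n V w
  | Check _ ((i, _) :: _) => @CoinX R n V i
  end.

Variable terms : seq term.

Definition step (q : state) (b : bool) : state :=
  match q with
  | Select [::] => Select terms
  | Select (e :: l) => if b then Check (term_out e) (term_coins e) else Select l
  | Check _ [::] => q
  | Check w ((_, c) :: T) => if b == c then Check w T else Select terms
  end.

Definition sampler (q : state) : bf_tree R n V :=
  fun p => state_node (foldl step q p).

Lemma sampler_wf q : bf_wf (sampler q).
Proof.
have half01 : 0 < (2^-1 : R) < 1 by apply/andP; split; lra.
move=> p c; rewrite /sampler.
by case: (foldl step q p) => [[|e l]|w [|[i b] T]] //= [<-] //; case: ifP.
Qed.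

Section OutputProbability.
Variables (x : 'I_n -> R) (v : V).
Hypothesis x01 : forall i, 0 <= x i <= 1.

Let pr q := out_prob x v (sampler q).
Let mono e := bern_monomial (term_a e) (term_b e) x.

Lemma out_prob_samplerE q :
  pr q = leaf_ind (state_node q) v + edge_prob x (state_node q) true * pr (step q true)
       + edge_prob x (state_node q) false * pr (step q false).
Proof. exact/out_probE/substochastic_wf/x01/sampler_wf. Qed.

Definition coins_prob (T : seq ('I_n * bool)) : R :=
  \prod_(ic <- T) (if ic.2 then x ic.1 else 1 - x ic.1).

Lemma coins_prob_term e : coins_prob (term_coins e) = mono e.
Proof.
rewrite /coins_prob /term_coins big_flatten big_map /mono /bern_monomial.
by apply: eq_bigr => i _; rewrite big_cat !big_nseq /= !iter_mulr_1.
Qed.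

Lemma out_prob_Check w T :
  pr (Check w T) = coins_prob T * (w == v)%:R + (1 - coins_prob T) * pr (Select terms).
Proof.
elim: T => [|[i c] T IHT].
  by rewrite out_prob_samplerE /coins_prob big_nil /leaf_ind /=; ring.
rewrite out_prob_samplerE /coins_prob big_cons -/(coins_prob T) /leaf_ind /=.
by case: c; rewrite /= IHT; ring.
Qed.

Lemma out_prob_Select l : all (fun e => 0 < term_coef e) l ->
  pr (Select l) * (weight l + 1) =
  \sum_(e <- l) term_coef e * (mono e * (term_out e == v)%:R
                               + (1 - mono e) * pr (Select terms))
  + pr (Select terms).
Proof.
elim: l => [|e l IHl] /=.
  by rewrite out_prob_samplerE /weight !big_nil /leaf_ind /= => _; ring.
move=> /andP[e_pos l_pos].
have weight_ge0 : 0 <= weight l.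
  by rewrite /weight -(all_filterP l_pos) big_filter sumr_ge0 // => e' /ltW.
have bias01 : 0 < select_bias e l < 1.
  by rewrite /select_bias divr_gt0 ?ltr_pdivrMr /=; lra.
rewrite out_prob_samplerE /= bias01 /leaf_ind /= add0r out_prob_Check coins_prob_term.
rewrite big_cons /weight big_cons -/(weight l) -[in RHS]addrA -(IHl l_pos).
by rewrite /select_bias; field; lra.
Qed.

Lemma out_prob_sampler : all (fun e => 0 < term_coef e) terms ->
  pr (Select terms) * \sum_(e <- terms) term_coef e * mono e =
  \sum_(e <- terms | term_out e == v) term_coef e * mono e.
Proof.
move=> terms_pos; have := out_prob_Select terms_pos.
have -> : \sum_(e <- terms) term_coef e * (mono e * (term_out e == v)%:R
                                         + (1 - mono e) * pr (Select terms))
    = \sum_(e <- terms | term_out e == v) term_coef e * mono e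
      + (weight terms - \sum_(e <- terms) term_coef e * mono e) * pr (Select terms).
  rewrite /weight mulrBl !mulr_suml -sumrB [in RHS]big_mkcond -big_split /=.
  by apply: eq_bigr => e _; case: eqP => _ /=; ring.
by lra.
Qed.

End OutputProbability.
End RejectionSampler.

Section BernsteinSampler.
Variables (R : realType) (n : nat) (V : finType).

Definition bernstein_repr (P : ('I_n -> R) -> R)
    (s : seq (R * ('I_n -> nat) * ('I_n -> nat))) : Prop :=
  (forall t, t \in s -> 0 < t.1.1) /\
  (forall x, P x = \sum_(t <- s) t.1.1 * bern_monomial t.1.2 t.2 x).

Definition bernstein_terms (s : V -> seq (R * ('I_n -> nat) * ('I_n -> nat))) :
    seq (term R n V) :=
  flatten [seq [seq Term w t.1.1 t.1.2 t.2 | t <- s w] | w <- index_enum V].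

Lemma big_bernstein_terms s (P : pred (term R n V)) (F : term R n V -> R) :
  \sum_(e <- bernstein_terms s | P e) F e =
  \sum_(w : V) \sum_(t <- s w | P (Term w t.1.1 t.1.2 t.2)) F (Term w t.1.1 t.1.2 t.2).
Proof. by rewrite big_flatten big_map; apply: eq_bigr => w _; rewrite big_map. Qed.

Lemma bernstein_terms_pos s :
  (forall w t, t \in s w -> 0 < t.1.1) ->
  all (fun e => 0 < term_coef e) (bernstein_terms s).
Proof.
move=> s_pos; rewrite /bernstein_terms; elim: (index_enum V) => //= w ws IHws.
by rewrite all_cat IHws all_map andbT; apply/allP => t /s_pos.
Qed.

Lemma out_prob_bernstein_sampler P s x v :
  (forall w, bernstein_repr (P w) (s w)) -> (forall i, 0 <= x i <= 1) ->
  let terms := bernstein_terms s in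
  out_prob x v (sampler terms (Select terms)) * \sum_(w : V) P w x = P v x.
Proof.
move=> s_P x01 terms.
have weight_eq : \sum_(e <- terms) term_coef e * bern_monomial (term_a e) (term_b e) x
    = \sum_(w : V) P w x.
  by rewrite big_bernstein_terms; apply: eq_bigr => w _; rewrite (s_P w).2.
have out_eq : \sum_(e <- terms | term_out e == v)
    term_coef e * bern_monomial (term_a e) (term_b e) x = P v x.
  rewrite big_bernstein_terms /= (bigD1 v) //= eqxx -(s_P v).2 big1 ?addr0 //.
  by move=> w /negbTE w_v; rewrite big_pred0 // => t; rewrite w_v.
rewrite -weight_eq -out_eq; apply: out_prob_sampler => //.
by apply: bernstein_terms_pos => w; case: (s_P w).
Qed.

End BernsteinSampler.

Theorem corollary2p6 (R : realType) (n : nat) (V : finType)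
  (P : V -> ('I_n -> R) -> R) (S : set ('I_n -> R)) :
  (forall v, is_bernstein (P v)) ->
  (forall x, S x -> forall i, 0 <= x i <= 1) ->
  (forall x, S x -> 0 < \sum_(v : V) P v x) ->
  exists t : bf_tree R n V,
    bf_wf t /\ terminates_as_on t S /\
    (forall x, S x -> forall v : V,
        outputs_with_prob t x v (P v x / \sum_(w : V) P w x)).
Proof.
move=> P_bern S01 S_pos.
have [s s_P] : {s & forall v, bernstein_repr (P v) (s v)} := choice P_bern.
pose t := sampler (bernstein_terms s) (Select (bernstein_terms s)).
have t_out x : S x -> forall v, outputs_with_prob t x v (P v x / \sum_(w : V) P w x).
  move=> Sx v; rewrite -(out_prob_bernstein_sampler v s_P (S01 x Sx)).
  rewrite mulfK ?gt_eqF ?S_pos //.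
  by apply/out_prob_upto_cvg/substochastic_wf; [exact: sampler_wf | exact: S01].
exists t; split; first exact: sampler_wf.
split=> [x Sx|]; last exact: t_out.
apply: terminates_of_outputs (t_out x Sx) _.
by rewrite -mulr_suml divff // gt_eqF // S_pos.
Qed.
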